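(* In the model described in the context, for every number of users $N\in\mathbb{N}$, $$\Delta C(N)\le \frac{1}{T}\sum_{t=0}^{T-1}\sum_{m=1}^{M}S(m)\sum_{n\in\mathcal{B}_t(m)}\mathbb{E}\bigl[I_{n,t}(m)\,C'(L_t)-C'(L_{t-1})\bigr].$$
   Context: There are $N$ users, $M$ data items and a period of $T$ time slots. Item $m\in\{1,\dots,M\}$ has size $S(m)>0$. For each user $n$ and slot $t$ there is a demand profile $\mathbf{P}_{n,t}=(P_{n,t}(m))_{m=1}^M$ with $P_{n,t}(m)\ge 0$ and $\sum_m P_{n,t}(m)\le 1$. The profiles are periodic: $\mathbf{P}_{n,t}=\mathbf{P}_{n,t+kT}$ for all integers $k\ge 0$. The demand is modeled by $\{0,1\}$-valued random variables $I_{n,t}(m)$ with $\Pr(I_{n,t}(m)=1)=P_{n,t}(m)$ and $\sum_m I_{n,t}(m)\le 1$ (each user requests at most one item per slot). For $n\neq k$, $(I_{n,t}(m))_m$ is independent of $(I_{k,t}(j))_j$. The non-proactive load is $L_t=\sum_{m=1}^M\sum_{n=1}^N S(m)I_{n,t}(m)$. The cost function $C:\mathbb{R}_+\to\mathbb{R}_+$ is smooth, strictly convex and monotonically increasing, with derivative $C'$. Slot indices are taken modulo $T$, so $L_{-1}$ stands for $L_{T-1}$ and $x_{n,T}=x_{n,0}$. The non-proactive cost is $C^{\mathcal N}(N)=\frac1T\sum_{t=0}^{T-1}\mathbb{E}[C(L_t)]$. The proactive cost is $$C^{\mathcal P}(N)=\min_{\mathbf{x}}\ \frac1T\sum_{t=0}^{T-1}\mathbb{E}\Bigl[C\Bigl(L_t+\sum_{m=1}^M\sum_{n=1}^N\bigl(x_{n,t+1}(m)-x_{n,t}(m)I_{n,t}(m)\bigr)\Bigr)\Bigr],$$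 minimized over proactive downloads $x_{n,t}(m)$ subject to $0\le x_{n,t}(m)\le S(m)$ for all $m,n$ and $t=0,\dots,T-1$, and $x_{n,0}=x_{n,T}$. Here $x_{n,t+1}(m)$ is the portion of item $m$ sent to user $n$ in slot $t$ ahead of slot $t+1$. The cost reduction is $\Delta C(N)=C^{\mathcal N}(N)-C^{\mathcal P}(N)$. The set of active users for item $m$ at slot $t$ is $\mathcal{B}_t(m)=\{n:\mathbb{E}[I_{n,t}(m)C'(L_t)-C'(L_{t-1})]>0\}$. *)

From HB Require Import structures.
From mathcomp Require Import all_boot all_order all_algebra.
From mathcomp Require Import boolp classical_sets reals.
Set Implicit Arguments. Unset Strict Implicit. Unset Printing Implicit Defensive.
Import Order.TTheory GRing.Theory Num.Theory.
Local Open Scope ring_scope.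

Section Model.
Variable R : realType.

Definition deriv_nonneg (f f' : R -> R) : Prop :=
  forall x, 0 <= x -> forall e, 0 < e -> exists2 d, 0 < d &
    forall h, h != 0 -> `|h| < d -> 0 <= x + h ->
      `|(f (x + h) - f x) / h - f' x| < e.

Definition smooth_nonneg (f f' : R -> R) : Prop :=
  exists D : nat -> R -> R,
    [/\ D 0%N = f, D 1%N = f' & forall k, deriv_nonneg (D k) (D k.+1)].

Definition strictly_convex_nonneg (f : R -> R) : Prop :=
  forall x y l, 0 <= x -> 0 <= y -> x != y -> 0 < l -> l < 1 ->
    f (l * x + (1 - l) * y) < l * f x + (1 - l) * f y.

Definition increasing_nonneg (f : R -> R) : Prop :=
  forall x y, 0 <= x -> x <= y -> f x <= f y.

Definition cost_fun (C C' : R -> R) : Prop :=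
  [/\ forall x, 0 <= x -> 0 <= C x,
      smooth_nonneg C C',
      strictly_convex_nonneg C &
      increasing_nonneg C].

Variables (Omega : finType) (mu : Omega -> R).

Definition prob_space : Prop :=
  (forall w, 0 <= mu w) /\ \sum_(w : Omega) mu w = 1.

Definition Ex (f : Omega -> R) : R := \sum_(w : Omega) mu w * f w.
Definition Pr (A : pred Omega) : R := \sum_(w : Omega | A w) mu w.

Variables (N M T : nat).
Variable S : 'I_M -> R.
Variable I : 'I_N -> 'I_T -> 'I_M -> Omega -> bool.

Definition ind (b : bool) : R := (b : nat)%:R.

Definition load (t : 'I_T) (w : Omega) : R :=
  \sum_(m < M) \sum_(n < N) S m * ind (I n t m w).

Definition demand_model (P : 'I_N -> 'I_T -> 'I_M -> R) : Prop :=
  [/\ forall n t m, 0 <= P n t m,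
      forall n t, \sum_(m < M) P n t m <= 1,
      forall n t m, Pr (I n t m) = P n t m,
      forall n t w, (\sum_(m < M) (I n t m w : nat) <= 1)%N &
      (* independence of the demand vectors of distinct users in a slot *)
      forall t n k, n != k -> forall a b : 'I_M -> bool,
        Pr (fun w => [forall m, I n t m w == a m] && [forall j, I k t j w == b j])
        = Pr (fun w => [forall m, I n t m w == a m]) *
          Pr (fun w => [forall j, I k t j w == b j])].

Variables C C' : R -> R.

Definition cost_nonproactive : R :=
  T%:R^-1 * \sum_(t < T) Ex (fun w => C (load t w)).

(* feasible proactive downloads: x n t m for t in 'I_T, x_{n,T} := x_{n,0}
   (indices taken modulo T via ordS) *)
Definition feasible (x : 'I_N -> 'I_T -> 'I_M -> R) : Prop :=
  forall n t m, 0 <= x n t m <= S m.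

Definition proactive_objective (x : 'I_N -> 'I_T -> 'I_M -> R) : R :=
  T%:R^-1 * \sum_(t < T) Ex (fun w =>
    C (load t w + \sum_(m < M) \sum_(n < N)
         (x n (ordS t) m - x n t m * ind (I n t m w)))).

(* the minimum over feasible x (attained; written as infimum) *)
Definition cost_proactive : R :=
  inf [set proactive_objective x | x in feasible].

Definition cost_reduction : R := cost_nonproactive - cost_proactive.

(* E[I_{n,t}(m) C'(L_t) - C'(L_{t-1})], with t-1 taken modulo T *)
Definition gain (n : 'I_N) (t : 'I_T) (m : 'I_M) : R :=
  Ex (fun w => ind (I n t m w) * C' (load t w) - C' (load (ord_pred t) w)).

Definition active_users (t : 'I_T) (m : 'I_M) : {set 'I_N} :=
  [set n | 0 < gain n t m].

Definition reduction_bound : R :=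
  T%:R^-1 * \sum_(t < T) \sum_(m < M)
    S m * \sum_(n in active_users t m) gain n t m.

End Model.

From HB Require Import structures.
From mathcomp Require Import all_boot all_order all_algebra.
From mathcomp Require Import boolp classical_sets reals.
From mathcomp Require Import ring lra.
Set Implicit Arguments. Unset Strict Implicit. Unset Printing Implicit Defensive.
Import Order.TTheory GRing.Theory Num.Theory.
Local Open Scope ring_scope.

(* By convexity, C lies above its tangent at the non-proactive load:
   C(L_t + D_t) >= C(L_t) + C'(L_t) D_t, where D_t is the extra load caused
   by a feasible download schedule x.  Summing over t and shifting the slot
   index of the x_{n,t+1} terms, the resulting upper bound on the cost
   reduction is linear in x with coefficient E[I_{n,t}(m) C'(L_t) - C'(L_{t-1})]
   on x_{n,t}(m) in [0, S(m)], so it is at most S(m) times the positive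
   coefficients, i.e. those of the active users. *)

Section ConvexTangent.
Variables (R : realType) (f f' : R -> R).
Hypotheses (f_deriv : deriv_nonneg f f') (f_convex : strictly_convex_nonneg f).

Lemma convex_chord_le x y l : 0 <= x -> 0 <= y -> 0 < l -> l < 1 ->
  f (x + l * (y - x)) - f x <= l * (f y - f x).
Proof.
move=> x0 y0 l0 l1.
have [->|yx] := eqVneq y x; first by rewrite !subrr mulr0 addr0 subrr.
have -> : x + l * (y - x) = l * y + (1 - l) * x by ring.
by have := f_convex y0 x0 yx l0 l1; lra.
Qed.

Lemma convex_tangent_le x y : 0 <= x -> 0 <= y -> f x + f' x * (y - x) <= f y.
Proof.
move=> x0 y0; rewrite -lerBrDl.
have [->|yx] := eqVneq y x; first by rewrite !subrr mulr0.
set D := y - x.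
have DN0 : D != 0 by rewrite subr_eq0.
have D_gt0 : 0 < `|D| by rewrite normr_gt0.
apply/ler_addgt0Pr => e e0.
have [d d0 near_x] := f_deriv x0 (divr_gt0 e0 D_gt0).
(* a step h = l D along the chord, short enough for the derivative estimate *)
set l := Num.min (1/2 : R) (d / (2 * `|D|)).
have l0 : 0 < l by rewrite lt_min; apply/andP; split; [lra | apply: divr_gt0 => //; lra].
have l_half : l <= 1/2 by rewrite ge_min lexx.
have l1 : l < 1 by lra.
have lD : l * `|D| <= d / 2.
  have <- : d / (2 * `|D|) * `|D| = d / 2 by field; rewrite gt_eqF.
  by apply: ler_wpM2r; [exact: ltW | rewrite ge_min lexx orbT].
set h := l * D.
have hN0 : h != 0 by rewrite mulf_neq0 // gt_eqF.
have hd : `|h| < d by rewrite normrM gtr0_norm //; lra.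
have xh0 : 0 <= x + h.
  have -> : x + h = l * y + (1 - l) * x by rewrite /h /D; ring.
  by apply: addr_ge0; apply: mulr_ge0; lra.
have := near_x h hN0 hd xh0; set q := (f (x + h) - f x) / h => q_near.
have qD : q * D <= f y - f x.
  have qh : l * (q * D) = f (x + h) - f x by rewrite mulrCA divfK.
  by rewrite -(ler_pM2l l0) qh; exact: convex_chord_le.
have qf'D : `|(q - f' x) * D| < e.
  by rewrite normrM; move: q_near; rewrite -(ltr_pM2r D_gt0) divfK ?gt_eqF.
by have := ler_norm (- ((q - f' x) * D)); rewrite normrN; lra.
Qed.

End ConvexTangent.

Section Expectation.
Variables (R : realType) (Omega : finType) (mu : Omega -> R).

Lemma Ex_sum (J : finType) (F : J -> Omega -> R) :
  Ex mu (fun w => \sum_(j : J) F j w) = \sum_(j : J) Ex mu (F j).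
Proof.
by rewrite /Ex; under eq_bigr do rewrite mulr_sumr; exact: exchange_big.
Qed.

Lemma ExB f g : Ex mu (fun w => f w - g w) = Ex mu f - Ex mu g.
Proof. by rewrite /Ex -sumrB; apply: eq_bigr => w _; rewrite mulrBr. Qed.

Lemma ExZ c f : Ex mu (fun w => c * f w) = c * Ex mu f.
Proof. by rewrite /Ex mulr_sumr; apply: eq_bigr => w _; rewrite mulrCA. Qed.

Lemma ler_Ex f g : (forall w, 0 <= mu w) -> (forall w, f w <= g w) ->
  Ex mu f <= Ex mu g.
Proof. by move=> mu0 fg; apply: ler_sum => w _; exact: ler_wpM2l. Qed.

End Expectation.

Lemma sum_ordS_shift (R : nzRingType) (T : nat) (u v : 'I_T -> R) :
  \sum_(t < T) u (ordS t) * v t = \sum_(t < T) u t * v (ord_pred t).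
Proof.
rewrite (reindex_inj (can_inj (@ord_predK T))) /=.
by apply: eq_bigr => t _; rewrite ord_predK.
Qed.

Section ProactiveBound.
Variables (R : realType) (Omega : finType) (mu : Omega -> R).
Variables (N M T : nat) (S : 'I_M -> R) (I : 'I_N -> 'I_T -> 'I_M -> Omega -> bool).
Variables C C' : R -> R.
Hypotheses (mu_ge0 : forall w, 0 <= mu w) (S_ge0 : forall m, 0 <= S m).
Hypotheses (C_deriv : deriv_nonneg C C') (C_convex : strictly_convex_nonneg C).

Definition extra_load (x : 'I_N -> 'I_T -> 'I_M -> R) (t : 'I_T) (w : Omega) : R :=
  \sum_(m < M) \sum_(n < N) (x n (ordS t) m - x n t m * ind R (I n t m w)).

Lemma ind_ge0 b : 0 <= ind R b.
Proof. exact: ler0n. Qed.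

Lemma load_ge0 t w : 0 <= load S I t w.
Proof.
by apply: sumr_ge0 => m _; apply: sumr_ge0 => n _; rewrite mulr_ge0 ?ind_ge0.
Qed.

Lemma proactive_load_ge0 x t w : feasible S x ->
  0 <= load S I t w + extra_load x t w.
Proof.
move=> x_feas; rewrite /load /extra_load -big_split /=; apply: sumr_ge0 => m _.
rewrite -big_split /=; apply: sumr_ge0 => n _.
have /andP[x0 xS] := x_feas n t m; have /andP[xS0 _] := x_feas n (ordS t) m.
have : x n t m * ind R (I n t m w) <= S m * ind R (I n t m w).
  by rewrite ler_wpM2r ?ind_ge0.
lra.
Qed.

Lemma cost_drop_le_tangent x t w : feasible S x ->
  C (load S I t w) - C (load S I t w + extra_load x t w)
  <= - (C' (load S I t w) * extra_load x t w).
Proof.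
move=> x_feas.
have := convex_tangent_le C_deriv C_convex (load_ge0 t w) (proactive_load_ge0 t w x_feas).
by rewrite addrAC subrr add0r; lra.
Qed.

Lemma Ex_tangent_extra_load x t :
  Ex mu (fun w => - (C' (load S I t w) * extra_load x t w)) =
  \sum_(m < M) \sum_(n < N)
    (x n t m * Ex mu (fun w => ind R (I n t m w) * C' (load S I t w))
     - x n (ordS t) m * Ex mu (fun w => C' (load S I t w))).
Proof.
have -> : (fun w => - (C' (load S I t w) * extra_load x t w)) =
          (fun w => \sum_(m < M) \sum_(n < N)
             (x n t m * (ind R (I n t m w) * C' (load S I t w))
              - x n (ordS t) m * C' (load S I t w))).
  apply/funext => w; rewrite /extra_load mulr_sumr -sumrN; apply: eq_bigr => m _.
  by rewrite mulr_sumr -sumrN; apply: eq_bigr => n _; ring.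
rewrite Ex_sum; apply: eq_bigr => m _; rewrite Ex_sum; apply: eq_bigr => n _.
by rewrite ExB !ExZ.
Qed.

Lemma sum_Ex_tangent_extra_load x :
  \sum_(t < T) Ex mu (fun w => - (C' (load S I t w) * extra_load x t w)) =
  \sum_(t < T) \sum_(m < M) \sum_(n < N) x n t m * gain mu S I C' n t m.
Proof.
under eq_bigr do rewrite Ex_tangent_extra_load.
rewrite exchange_big [RHS]exchange_big; apply: eq_bigr => m _ /=.
rewrite exchange_big [RHS]exchange_big; apply: eq_bigr => n _ /=.
rewrite sumrB (sum_ordS_shift (fun t => x n t m)) -sumrB.
by apply: eq_bigr => t _; rewrite /gain ExB mulrBr.
Qed.

Lemma sum_weighted_gain_le x t m : feasible S x ->
  \sum_(n < N) x n t m * gain mu S I C' n t m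
  <= S m * \sum_(n in active_users mu S I C' t m) gain mu S I C' n t m.
Proof.
move=> x_feas; rewrite mulr_sumr [X in _ <= X]big_mkcond /=; apply: ler_sum => n _.
have /andP[x0 xS] := x_feas n t m; rewrite inE.
by case: ltrP => gain_sign; [rewrite ler_wpM2r // ltW | rewrite mulr_ge0_le0].
Qed.

Lemma cost_gap_le_reduction_bound x : feasible S x ->
  cost_nonproactive mu S I C - proactive_objective mu S I C x
  <= reduction_bound mu S I C'.
Proof.
move=> x_feas; rewrite /cost_nonproactive /proactive_objective -mulrBr.
apply: ler_wpM2l; first by rewrite invr_ge0 ler0n.
rewrite -sumrB; apply: le_trans (_ : _ <= \sum_(t < T)
  Ex mu (fun w => - (C' (load S I t w) * extra_load x t w))) _.
  apply: ler_sum => t _; rewrite -ExB; apply: ler_Ex => // w.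
  exact: cost_drop_le_tangent.
rewrite sum_Ex_tangent_extra_load; apply: ler_sum => t _; apply: ler_sum => m _.
exact: sum_weighted_gain_le.
Qed.

End ProactiveBound.

Theorem lemma2 (R : realType) (Omega : finType) (mu : Omega -> R)
  (N M T : nat) (S : 'I_M -> R) (P : 'I_N -> 'I_T -> 'I_M -> R)
  (I : 'I_N -> 'I_T -> 'I_M -> Omega -> bool) (C C' : R -> R) :
  (0 < T)%N ->
  prob_space mu ->
  (forall m, 0 < S m) ->
  demand_model mu I P ->
  cost_fun C C' ->
  cost_reduction mu S I C <= reduction_bound mu S I C'.
Proof.
move=> _ [mu_ge0 _] S_gt0 _ [_ [D [D0 D1 D_deriv]] C_convex _].
have C_deriv : deriv_nonneg C C' by rewrite -D0 -D1.
have S_ge0 m : 0 <= S m by exact: ltW.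
rewrite /cost_reduction lerBlDr addrC -lerBlDr.
apply: lb_le_inf.
  exists (proactive_objective mu S I C (fun _ _ _ => 0)).
  by exists (fun _ _ _ => 0) => // n t m; rewrite lexx S_ge0.
move=> _ [x x_feas <-].
rewrite lerBlDr addrC -lerBlDr.
exact: (cost_gap_le_reduction_bound I mu_ge0 S_ge0 C_deriv C_convex x_feas).
Qed.
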